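(* Let $\{w^k\}$ be generated by the L-GADMM iteration and $\{\bar w^k\}$ be the auxiliary sequence. Then for every $k\ge0$ and every $w^*\in\mathcal{W}^*$, $$\|w^{k+1}-w^*\|_H^2\le\|w^k-w^*\|_H^2-\|w^k-\bar w^k\|_N^2.$$
   Context: Standing setting. Let $m\ge 2$, $\ell$, $n_1,\dots,n_m$ be positive integers. For $i=1,\dots,m$ let $\theta_i:\mathbb{R}^{n_i}\to\mathbb{R}$ be convex, $\mathcal{X}_i\subseteq\mathbb{R}^{n_i}$ nonempty closed convex, $A_i\in\mathbb{R}^{\ell\times n_i}$ of full column rank, and $b\in\mathbb{R}^\ell$. Problem (P): $\min\{\sum_{i=1}^m\theta_i(x_i):\sum_{i=1}^mA_ix_i=b,\ x_i\in\mathcal{X}_i\}$, assumed to have a nonempty solution set. Write $u=(x_1,\dots,x_m)$, $w=(x_1,\dots,x_m,y)$ with $y\in\mathbb{R}^\ell$, $\theta(u)=\sum_i\theta_i(x_i)$, $F(w)=(-A_1^\top y,\dots,-A_m^\top y,\ \sum_iA_ix_i-b)$, $\mathcal{W}=\mathcal{X}_1\times\cdots\times\mathcal{X}_m\times\mathbb{R}^\ell$, and $\mathcal{W}^*=\{w^*\in\mathcal{W}:\theta(u)-\theta(u^* )+(w-w^* )^\top F(w^* )\ge0\ \forall w\in\mathcal{W}\}$ (nonempty). For symmetric $G$, $\|v\|_G^2:=v^\top Gv$; $\|\cdot\|$ is the Euclidean norm. Vectors are partitioned as $w=(R,x_m,y)$ with $R=(x_1,\dots,x_{m-1})$. Parameters: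 $\rho>0$, $\gamma\in(0,2)$, symmetric positive definite $P_i\in\mathbb{R}^{n_i\times n_i}$ ($i=1,\dots,m$) such that $G_1\succ0$, where $G_1$ is the symmetric block matrix with diagonal blocks $P_1,\dots,P_{m-1}$ and $(i,j)$ block $-\rho A_i^\top A_j$ for $i\ne j$, $1\le i,j\le m-1$. Matrices (w.r.t. the partition $(R,x_m,y)$): $Q=\begin{pmatrix}G_1&0&0\\0&\rho A_m^\top A_m+P_m&(1-\gamma)A_m^\top\\0&-A_m&\frac1\rho I_\ell\end{pmatrix}$, $M=\begin{pmatrix}I&0&0\\0&I_{n_m}&0\\0&-\rho A_m&\gamma I_\ell\end{pmatrix}$, $H=\begin{pmatrix}G_1&0&0\\0&P_m+\frac\rho\gamma A_m^\top A_m&\frac{1-\gamma}\gamma A_m^\top\\0&\frac{1-\gamma}\gamma A_m&\frac1{\gamma\rho}I_\ell\end{pmatrix}$, $N=Q^\top+Q-M^\top HM$. L-GADMM iteration: from an arbitrary $w^0=(x_1^0,\dots,x_m^0,y^0)\in\mathcal{W}$, for $k=0,1,2,\dots$: $x_j^{k+1}=\arg\min_{x_j\in\mathcal{X}_j}\{\theta_j(x_j)+\frac\rho2\|A_jx_j+\sum_{i=1,i\ne j}^mA_ix_i^k-b-\frac{y^k}\rho\|^2+\frac12\|x_j-x_j^k\|_{P_j}^2\}$ for $j=1,\dots,m-1$; $x_m^{k+1}=\arg\min_{x_m\in\mathcal{X}_m}\{\theta_m(x_m)+\frac\rho2\|\gamma\sum_{i=1}^{m-1}A_ix_i^{k+1}+(1-\gamma)(b-A_mx_m^k)+A_mx_m-b-\frac{y^k}\rho\|^2+\frac12\|x_m-x_m^k\|_{P_m}^2\}$;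 $y^{k+1}=y^k-\rho\big(\gamma\sum_{i=1}^{m-1}A_ix_i^{k+1}+(1-\gamma)(b-A_mx_m^k)+A_mx_m^{k+1}-b\big)$. Auxiliary sequence: $\bar w^k=(\bar x_1^k,\dots,\bar x_m^k,\bar y^k)$ with $\bar x_i^k=x_i^{k+1}$ ($i=1,\dots,m$) and $\bar y^k=y^k-\rho(\sum_{i=1}^{m-1}A_ix_i^{k+1}+A_mx_m^k-b)$; $\bar u^k=(\bar x_1^k,\dots,\bar x_m^k)$, $R^k=(x_1^k,\dots,x_{m-1}^k)$, $\bar R^k=(\bar x_1^k,\dots,\bar x_{m-1}^k)$. *)

From HB Require Import structures.
From mathcomp Require Import all_boot all_order all_algebra.
From mathcomp Require Import all_classical all_reals all_analysis.
Set Implicit Arguments. Unset Strict Implicit. Unset Printing Implicit Defensive.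
Import Order.TTheory GRing.Theory Num.Theory.
Import numFieldTopology.Exports.
Local Open Scope ring_scope.

Section LGADMM.
Variable R : realType.

Definition sqnorm (k : nat) (v : 'cV[R]_k) : R := (v^T *m v) 0 0.
Definition qnorm (k : nat) (G : 'M[R]_k) (v : 'cV[R]_k) : R := (v^T *m G *m v) 0 0.

Definition spd (k : nat) (P : 'M[R]_k) : Prop :=
  P^T = P /\ forall v : 'cV[R]_k, v != 0 -> 0 < qnorm P v.

Definition cvx_fun (k : nat) (f : 'cV[R]_k -> R) : Prop :=
  forall (x y : 'cV[R]_k) (t : R), 0 <= t -> t <= 1 ->
    f (t *: x + (1 - t) *: y) <= t * f x + (1 - t) * f y.

Definition cvx_set (k : nat) (S : set 'cV[R]_k) : Prop :=
  forall (x y : 'cV[R]_k) (t : R), S x -> S y -> 0 <= t -> t <= 1 ->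
    S (t *: x + (1 - t) *: y).

Definition is_argmin (k : nat) (S : set 'cV[R]_k) (f : 'cV[R]_k -> R) (x : 'cV[R]_k) : Prop :=
  S x /\ forall z, S z -> f x <= f z.

Variables (m : nat) (hm : (2 <= m)%N) (l : nat) (n : 'I_m -> nat).

(* the last block index m (numbered m-1 in 'I_m) *)
Definition lst : 'I_m := Ordinal (introT idP (etrans (ltn_predL m) (ltnW hm))).

Definition fam := forall i : 'I_m, 'cV[R]_(n i).
Definition Wsp := (fam * 'cV[R]_l)%type.

Definition wsub (w z : Wsp) : Wsp := (fun i => w.1 i - z.1 i, w.2 - z.2).
Definition wadd (w z : Wsp) : Wsp := (fun i => w.1 i + z.1 i, w.2 + z.2).
Definition ipw (w z : Wsp) : R :=
  \sum_(i < m) ((w.1 i)^T *m z.1 i) 0 0 + (w.2^T *m z.2) 0 0.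

Variables (A : forall i : 'I_m, 'M[R]_(l, n i)) (b : 'cV[R]_l).
Variables (P : forall i : 'I_m, 'M[R]_(n i)) (rho gamma : R).

(* action of G_1 (on R = (x_1..x_{m-1}); the m-th component is 0 / ignored) *)
Definition G1op (x : fam) : fam := fun i =>
  if i != lst then
    P i *m x i - rho *: \sum_(j < m | (j != lst) && (j != i)) ((A i)^T *m A j *m x j)
  else 0.
Definition G1Top (x : fam) : fam := fun i =>
  if i != lst then
    (P i)^T *m x i - rho *: \sum_(j < m | (j != lst) && (j != i)) (((A j)^T *m A i)^T *m x j)
  else 0.
Definition qG1 (x : fam) : R := \sum_(i < m | i != lst) ((x i)^T *m G1op x i) 0 0.

Definition Qop (w : Wsp) : Wsp :=
  (fun i => if i == lst then
      (rho *: ((A i)^T *m A i) + P i) *m w.1 i + (1 - gamma) *: ((A i)^T *m w.2)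
    else G1op w.1 i,
   - (A lst *m w.1 lst) + rho^-1 *: w.2).
Definition QTop (w : Wsp) : Wsp :=
  (fun i => if i == lst then
      (rho *: ((A i)^T *m A i) + P i)^T *m w.1 i + (- A i)^T *m w.2
    else G1Top w.1 i,
   ((1 - gamma) *: (A lst)^T)^T *m w.1 lst + (rho^-1 *: (1%:M : 'M[R]_l))^T *m w.2).
Definition Mop (w : Wsp) : Wsp :=
  (w.1, - rho *: (A lst *m w.1 lst) + gamma *: w.2).
Definition MTop (w : Wsp) : Wsp :=
  (fun i => if i == lst then w.1 i + (- rho *: A i)^T *m w.2 else w.1 i,
   gamma *: w.2).
Definition Hop (w : Wsp) : Wsp :=
  (fun i => if i == lst then
      (P i + (rho / gamma) *: ((A i)^T *m A i)) *m w.1 i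
        + ((1 - gamma) / gamma) *: ((A i)^T *m w.2)
    else G1op w.1 i,
   ((1 - gamma) / gamma) *: (A lst *m w.1 lst) + (gamma * rho)^-1 *: w.2).
Definition Nop (w : Wsp) : Wsp :=
  wsub (wadd (QTop w) (Qop w)) (MTop (Hop (Mop w))).

Definition normH (w : Wsp) : R := ipw w (Hop w).
Definition normN (w : Wsp) : R := ipw w (Nop w).

Unset Implicit Arguments.
Variables (theta : forall i : 'I_m, 'cV[R]_(n i) -> R)
          (X : forall i : 'I_m, set 'cV[R]_(n i)).

Definition thetaU (u : fam) : R := \sum_(i < m) theta i (u i).
Definition inW (w : Wsp) : Prop := forall i, X i (w.1 i).
Definition Fop (w : Wsp) : Wsp :=
  (fun i => - ((A i)^T *m w.2), \sum_(i < m) A i *m w.1 i - b).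
Definition Wstar (ws : Wsp) : Prop :=
  inW ws /\ forall w, inW w -> 0 <= thetaU w.1 - thetaU ws.1 + ipw (wsub w ws) (Fop ws).
Definition is_solP (u : fam) : Prop :=
  (forall i, X i (u i)) /\ \sum_(i < m) A i *m u i = b /\
  forall v : fam, (forall i, X i (v i)) -> \sum_(i < m) A i *m v i = b ->
     thetaU u <= thetaU v.

Definition subobj (xk : fam) (yk : 'cV[R]_l) (j : 'I_m) (z : 'cV[R]_(n j)) : R :=
  theta j z
  + rho / 2 * sqnorm (A j *m z + \sum_(i < m | i != j) A i *m xk i - b - rho^-1 *: yk)
  + 1 / 2 * qnorm (P j) (z - xk j).
Definition subobj_m (xk xk1 : fam) (yk : 'cV[R]_l) (z : 'cV[R]_(n lst)) : R :=
  theta lst z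
  + rho / 2 * sqnorm (gamma *: \sum_(i < m | i != lst) A i *m xk1 i
                      + (1 - gamma) *: (b - A lst *m xk lst) + A lst *m z - b - rho^-1 *: yk)
  + 1 / 2 * qnorm (P lst) (z - xk lst).

Definition is_LGADMM (xs : nat -> fam) (ys : nat -> 'cV[R]_l) : Prop :=
  inW (xs 0%N, ys 0%N) /\
  forall k : nat,
    (forall j : 'I_m, j != lst -> is_argmin (X j) (subobj (xs k) (ys k) j) (xs k.+1 j)) /\
    is_argmin (X lst) (subobj_m (xs k) (xs k.+1) (ys k)) (xs k.+1 lst) /\
    ys k.+1 = ys k - rho *: (gamma *: \sum_(i < m | i != lst) A i *m xs k.+1 i
                      + (1 - gamma) *: (b - A lst *m xs k lst) + A lst *m xs k.+1 lst - b).

Definition wbar (xs : nat -> fam) (ys : nat -> 'cV[R]_l) (k : nat) : Wsp :=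
  (xs k.+1, ys k - rho *: (\sum_(i < m | i != lst) A i *m xs k.+1 i + A lst *m xs k lst - b)).

End LGADMM.

Arguments thetaU {R m n} theta u.
Arguments inW {R m l n} X w.
Arguments Fop {R m l n} A b w.
Arguments Wstar {R m l n} A b theta X ws.
Arguments is_solP {R m l n} A b theta X u.
Arguments subobj {R m l n} A b P rho theta xk yk j z.
Arguments subobj_m {R m} hm {l n} A b P rho gamma theta xk xk1 yk z.
Arguments is_LGADMM {R m} hm {l n} A b P rho gamma theta X xs ys.
Arguments wbar {R m} hm {l n} A b rho xs ys k.

From HB Require Import structures.
From mathcomp Require Import all_boot all_order all_algebra.
From mathcomp Require Import all_classical all_reals all_analysis.
From mathcomp Require Import ring lra.
Import Order.TTheory GRing.Theory Num.Theory.
Import numFieldTopology.Exports.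
Local Open Scope ring_scope.
Local Open Scope classical_set_scope.

(* Since w^{k+1} = w^k - M (w^k - w̄^k) and H M = Q, expanding the H-norm gives
     ||w^{k+1} - w⋆||_H^2
       = ||w^k - w⋆||_H^2 - ||w^k - w̄^k||_N^2 - 2 (w̄^k - w⋆)^T Q (w^k - w̄^k).
   The first-order optimality conditions of the proximal subproblems say that w̄^k
   solves the variational inequality defining W*, perturbed by the term
   (w - w̄^k)^T Q (w^k - w̄^k). Testing it at w = w⋆ and adding the inequality of w⋆
   tested at w̄^k, the F-terms cancel (F is affine with skew-symmetric linear part),
   so the cross term above is nonpositive. *)

Section DotProduct.
Context {R : realType}.

Definition dot {k : nat} (u v : 'cV[R]_k) : R := (u^T *m v) 0 0.

Section Dim.
Context {k : nat}.
Implicit Types u v w : 'cV[R]_k.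

Lemma dotC u v : dot u v = dot v u.
Proof.
rewrite /dot; have -> : u^T *m v = (v^T *m u)^T by rewrite trmx_mul trmxK.
by rewrite mxE.
Qed.

Lemma dotDr u v w : dot u (v + w) = dot u v + dot u w.
Proof. by rewrite /dot mulmxDr mxE. Qed.
Lemma dotNr u v : dot u (- v) = - dot u v.
Proof. by rewrite /dot mulmxN mxE. Qed.
Lemma dotBr u v w : dot u (v - w) = dot u v - dot u w.
Proof. by rewrite dotDr dotNr. Qed.
Lemma dotZr (a : R) u v : dot u (a *: v) = a * dot u v.
Proof. by rewrite /dot -scalemxAr mxE. Qed.
Lemma dotDl u v w : dot (v + w) u = dot v u + dot w u.
Proof. by rewrite dotC dotDr !(dotC u). Qed.
Lemma dotNl u v : dot (- v) u = - dot v u.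
Proof. by rewrite dotC dotNr dotC. Qed.
Lemma dotBl u v w : dot (v - w) u = dot v u - dot w u.
Proof. by rewrite dotDl dotNl. Qed.
Lemma dotZl (a : R) u v : dot (a *: v) u = a * dot v u.
Proof. by rewrite dotC dotZr dotC. Qed.

Lemma dot_sumr (I : finType) (p : pred I) u (F : I -> 'cV[R]_k) :
  dot u (\sum_(i | p i) F i) = \sum_(i | p i) dot u (F i).
Proof. by rewrite /dot mulmx_sumr summxE. Qed.

End Dim.

Lemma dot_mulmx {k j : nat} (u : 'cV[R]_k) (B : 'M[R]_(k, j)) (v : 'cV[R]_j) :
  dot u (B *m v) = dot v (B^T *m u).
Proof. by rewrite [RHS]dotC /dot trmx_mul trmxK mulmxA. Qed.

Lemma dot_trmx_mulmx {k j : nat} (u : 'cV[R]_k) (B : 'M[R]_(j, k)) (v : 'cV[R]_j) :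
  dot u (B^T *m v) = dot v (B *m u).
Proof. by rewrite dot_mulmx trmxK. Qed.

Lemma sqnormE {k : nat} (v : 'cV[R]_k) : sqnorm v = dot v v.
Proof. by []. Qed.

Lemma qnormE {k : nat} (G : 'M[R]_k) (v : 'cV[R]_k) : qnorm G v = dot v (G *m v).
Proof. by rewrite /qnorm /dot mulmxA. Qed.

End DotProduct.

Section FirstOrderOptimality.
Context {R : realType}.

Lemma ge0_of_lin_quad_ge0 (a C : R) :
  (forall t : R, 0 < t -> t <= 1 -> 0 <= t * a + t ^+ 2 * C) -> 0 <= a.
Proof.
move=> H; rewrite leNgt; apply/negP => a_lt0.
have H1 := H 1 ltr01 (lexx 1); rewrite mul1r expr1n mul1r in H1.
have [C_le0|C_gt0] := lerP C 0; first lra.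
have [aC|aC] := lerP (- a) (2 * C); last lra.
(* at t = -a / (2C) the quadratic t a + t^2 C equals a t / 2 < 0 *)
set t := - a / (2 * C).
have t_gt0 : 0 < t by apply: divr_gt0; lra.
have t_le1 : t <= 1 by rewrite /t ler_pdivrMr; lra.
have tC : t * C = - a / 2 by rewrite /t; field; lra.
by have := H t t_gt0 t_le1; rewrite expr2 -mulrA tC; nra.
Qed.

Lemma argmin_first_order {k : nat} (S : set 'cV[R]_k) (th phi : 'cV[R]_k -> R)
    (x z : 'cV[R]_k) (D C : R) :
  cvx_fun th -> cvx_set S -> S z ->
  is_argmin S (fun y => th y + phi y) x ->
  (forall t, phi (t *: z + (1 - t) *: x) = phi x + t * D + t ^+ 2 * C) ->
  0 <= th z - th x + D.
Proof.
move=> th_cvx S_cvx Sz [Sx x_min] phi_exp; apply: (@ge0_of_lin_quad_ge0 _ C) => t t0 t1.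
have := x_min _ (S_cvx z x t Sz Sx (ltW t0) t1).
have := th_cvx z x t (ltW t0) t1.
rewrite phi_exp; nra.
Qed.

Lemma prox_quad_expand {k l : nat} (B : 'M[R]_(l, k)) (G : 'M[R]_k) (c : 'cV[R]_l)
    (x0 x z : 'cV[R]_k) (rho t : R) : G^T = G ->
  rho / 2 * sqnorm (B *m (t *: z + (1 - t) *: x) + c)
    + 1 / 2 * qnorm G (t *: z + (1 - t) *: x - x0)
  = (rho / 2 * sqnorm (B *m x + c) + 1 / 2 * qnorm G (x - x0))
    + t * dot (z - x) (rho *: (B^T *m (B *m x + c)) + G *m (x - x0))
    + t ^+ 2 * (rho / 2 * sqnorm (B *m (z - x)) + 1 / 2 * qnorm G (z - x)).
Proof.
move=> G_sym.
have -> : B *m (t *: z + (1 - t) *: x) + c = (B *m x + c) + t *: (B *m (z - x)).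
  rewrite mulmxDr mulmxBr -!scalemxAr.
  by apply/matrixP => i j; rewrite !mxE; ring.
have -> : t *: z + (1 - t) *: x - x0 = (x - x0) + t *: (z - x).
  by apply/matrixP => i j; rewrite !mxE; ring.
rewrite !sqnormE !qnormE.
move: (B *m x + c) (x - x0) (z - x) => u g q.
rewrite !mulmxDr -!scalemxAr !(dotDl, dotDr, dotZl, dotZr).
rewrite (dotC (B *m q) u) (dot_mulmx g G q) G_sym (dot_trmx_mulmx q B u).
by field.
Qed.

Lemma prox_argmin_vi {k l : nat} (S : set 'cV[R]_k) (th : 'cV[R]_k -> R)
    (B : 'M[R]_(l, k)) (G : 'M[R]_k) (c : 'cV[R]_l) (x0 x z : 'cV[R]_k) (rho : R) :
  G^T = G -> cvx_fun th -> cvx_set S -> S z ->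
  is_argmin S (fun y => th y + rho / 2 * sqnorm (B *m y + c) + 1 / 2 * qnorm G (y - x0)) x ->
  0 <= th z - th x + dot (z - x) (rho *: (B^T *m (B *m x + c)) + G *m (x - x0)).
Proof.
move=> G_sym th_cvx S_cvx Sz x_min.
apply: (@argmin_first_order _ _ _ (fun y => rho / 2 * sqnorm (B *m y + c)
  + 1 / 2 * qnorm G (y - x0)) _ _ _ _ th_cvx S_cvx Sz).
  by case: x_min => Sx x_min; split=> // y Sy; rewrite !addrA; apply: x_min.
by move=> t; apply: prox_quad_expand.
Qed.

End FirstOrderOptimality.

Section WSpace.
Context {R : realType} {m l : nat} {n : 'I_m -> nat}.
Implicit Types u v w : Wsp R l n.

Lemma ipwE u v : ipw u v = \sum_(i < m) dot (u.1 i) (v.1 i) + dot u.2 v.2.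
Proof. by []. Qed.

Lemma wspP u v : (forall i, u.1 i = v.1 i) -> u.2 = v.2 -> u = v.
Proof.
case: u => u1 u2; case: v => v1 v2 /= eq1 ->.
by rewrite (functional_extensionality_dep eq1).
Qed.

Lemma wsubAC u v w : wsub (wsub u v) w = wsub (wsub u w) v.
Proof. by apply: wspP => [i|] /=; rewrite addrAC. Qed.

Lemma wsub_subKl u v w : wsub (wsub u w) (wsub u v) = wsub v w.
Proof. by apply: wspP => [i|] /=; rewrite opprB addrC addrA subrK. Qed.

Lemma ipw_subl u v w : ipw (wsub u v) w = ipw u w - ipw v w.
Proof.
rewrite !ipwE /= dotBl; under eq_bigr => i _ do rewrite dotBl.
rewrite sumrB; lra.
Qed.

Lemma ipw_subr u v w : ipw w (wsub u v) = ipw w u - ipw w v.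
Proof.
rewrite !ipwE /= dotBr; under eq_bigr => i _ do rewrite dotBr.
rewrite sumrB; lra.
Qed.

Lemma ipw_addr u v w : ipw w (wadd u v) = ipw w u + ipw w v.
Proof.
rewrite !ipwE /= dotDr; under eq_bigr => i _ do rewrite dotDr.
rewrite big_split /=; lra.
Qed.

Lemma Fop_skew (A : forall i, 'M[R]_(l, n i)) (b : 'cV[R]_l) u v :
  ipw (wsub u v) (Fop A b v) + ipw (wsub v u) (Fop A b u) = 0.
Proof.
rewrite !ipwE /= !dotBr !dot_sumr !dotBl.
have cancel i : dot (u.1 i - v.1 i) (- ((A i)^T *m v.2))
    + dot (v.1 i - u.1 i) (- ((A i)^T *m u.2))
    + (dot (u.2 - v.2) (A i *m v.1 i) + dot (v.2 - u.2) (A i *m u.1 i)) = 0.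
  by rewrite !dotNr !dot_trmx_mulmx !mulmxBr !(dotBr, dotBl); lra.
have : \sum_(i < m) dot (u.1 i - v.1 i) (- ((A i)^T *m v.2))
    + \sum_(i < m) dot (v.1 i - u.1 i) (- ((A i)^T *m u.2))
    + (\sum_(i < m) dot (u.2 - v.2) (A i *m v.1 i)
       + \sum_(i < m) dot (v.2 - u.2) (A i *m u.1 i)) = 0.
  by rewrite -!big_split; apply: big1 => i _; apply: cancel.
lra.
Qed.

End WSpace.

Lemma big_offdiag_swap {V : zmodType} {I : finType} (p : I) (F : I -> I -> V) :
  \sum_(i | i != p) \sum_(j | (j != p) && (j != i)) F i j
  = \sum_(i | i != p) \sum_(j | (j != p) && (j != i)) F j i.
Proof.
rewrite (exchange_big_dep (fun j => j != p)) /=; last by move=> i j _ /andP[].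
apply: eq_bigr => j pj; apply: eq_bigl => i.
by rewrite pj /= (eq_sym j i).
Qed.

Section BlockOperators.
Context {R : realType} {m : nat} (hm : (2 <= m)%N) {l : nat} {n : 'I_m -> nat}.
Variables (A : forall i, 'M[R]_(l, n i)) (P : forall i, 'M[R]_(n i)) (rho gamma : R).
Implicit Types (x y : fam R n) (u v : Wsp R l n).

Lemma G1op_sub x y i :
  G1op hm A P rho (fun j => x j - y j) i = G1op hm A P rho x i - G1op hm A P rho y i.
Proof.
rewrite /G1op; case: ifP => _; last by rewrite subr0.
have -> : \sum_(j < m | (j != lst hm) && (j != i)) ((A i)^T *m A j *m (x j - y j))
  = \sum_(j < m | (j != lst hm) && (j != i)) ((A i)^T *m A j *m x j)
    - \sum_(j < m | (j != lst hm) && (j != i)) ((A i)^T *m A j *m y j).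
  by rewrite -sumrB; apply: eq_bigr => j _; rewrite mulmxBr.
by rewrite mulmxBr scalerBr !opprD !opprK addrACA.
Qed.

Lemma Hop_sub u v :
  Hop hm A P rho gamma (wsub u v) = wsub (Hop hm A P rho gamma u) (Hop hm A P rho gamma v).
Proof.
apply: wspP => [i|] /=; last by rewrite !mulmxBr !scalerBr opprD addrACA.
case: ifP => _; last exact: G1op_sub.
by rewrite !mulmxBr scalerBr opprD addrACA.
Qed.

Lemma dot_G1op x y i : i != lst hm ->
  dot (x i) (G1op hm A P rho y i) = dot (x i) (P i *m y i)
     - rho * \sum_(j < m | (j != lst hm) && (j != i)) dot (A i *m x i) (A j *m y j).
Proof.
move=> ilst; rewrite /G1op ilst dotBr dotZr dot_sumr; congr (_ - _ * _).
by apply: eq_bigr => j _; rewrite -mulmxA dot_trmx_mulmx dotC.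
Qed.

Lemma dot_G1Top x y i : i != lst hm ->
  dot (x i) (G1Top hm A P rho y i) = dot (y i) (P i *m x i)
     - rho * \sum_(j < m | (j != lst hm) && (j != i)) dot (A i *m x i) (A j *m y j).
Proof.
move=> ilst; rewrite /G1Top ilst dotBr dotZr dot_sumr dot_trmx_mulmx; congr (_ - _ * _).
by apply: eq_bigr => j _; rewrite dot_trmx_mulmx -mulmxA dot_trmx_mulmx.
Qed.

Lemma ipw_HopE u v :
  ipw u (Hop hm A P rho gamma v) =
  \sum_(i < m | i != lst hm) dot (u.1 i) (P i *m v.1 i)
  - rho * \sum_(i < m | i != lst hm) \sum_(j < m | (j != lst hm) && (j != i))
            dot (A i *m u.1 i) (A j *m v.1 j)
  + (dot (u.1 (lst hm)) (P (lst hm) *m v.1 (lst hm))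
     + rho / gamma * dot (A (lst hm) *m u.1 (lst hm)) (A (lst hm) *m v.1 (lst hm))
     + (1 - gamma) / gamma * dot (A (lst hm) *m u.1 (lst hm)) v.2
     + (1 - gamma) / gamma * dot (A (lst hm) *m v.1 (lst hm)) u.2
     + (gamma * rho)^-1 * dot u.2 v.2).
Proof.
rewrite ipwE (bigD1 (lst hm)) //=.
under eq_bigr => i ilst do rewrite (negbTE ilst) dot_G1op //.
rewrite sumrB -mulr_sumr eqxx mulmxDl -!scalemxAl -!mulmxA !(dotDr, dotZr).
rewrite !dot_trmx_mulmx (dotC u.2) (dotC (A (lst hm) *m v.1 (lst hm))) (dotC v.2).
lra.
Qed.

Lemma Hop_sym u v : (forall i, (P i)^T = P i) ->
  ipw u (Hop hm A P rho gamma v) = ipw v (Hop hm A P rho gamma u).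
Proof.
move=> P_sym; rewrite !ipw_HopE.
rewrite (big_offdiag_swap (lst hm) (fun i j => dot (A i *m v.1 i) (A j *m u.1 j))).
under [in RHS]eq_bigr => i _ do rewrite dot_mulmx P_sym.
under [X in _ = _ - rho * X + _]eq_bigr => i _ do under eq_bigr => j _ do rewrite dotC.
rewrite dot_mulmx P_sym (dotC (A (lst hm) *m u.1 (lst hm))) (dotC u.2 v.2).
ring.
Qed.

Lemma ipw_QTop u v : ipw u (QTop hm A P rho gamma v) = ipw v (Qop hm A P rho gamma u).
Proof.
rewrite !ipwE (bigD1 (lst hm)) // [in RHS](bigD1 (lst hm)) //=.
under eq_bigr => i ilst do rewrite (negbTE ilst) dot_G1Top //.
under [in RHS]eq_bigr => i ilst do rewrite (negbTE ilst) dot_G1op //.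
rewrite !sumrB -!mulr_sumr.
rewrite (big_offdiag_swap (lst hm) (fun i j => dot (A i *m v.1 i) (A j *m u.1 j))).
under [X in _ = _ + (_ - rho * X) + _]eq_bigr => i _ do under eq_bigr => j _ do rewrite dotC.
rewrite !eqxx !dotDr.
rewrite [dot (u.1 _) (_^T *m v.1 _)]dot_trmx_mulmx [dot (u.1 _) (_^T *m v.2)]dot_trmx_mulmx.
rewrite [dot u.2 (_^T *m v.1 _)]dot_trmx_mulmx [dot u.2 (_^T *m v.2)]dot_trmx_mulmx.
rewrite mulNmx -!scalemxAl mul1mx !(dotNr, dotZr).
lra.
Qed.

Lemma ipw_MTop u v : ipw u (MTop hm A rho gamma v) = ipw (Mop hm A rho gamma u) v.
Proof.
rewrite !ipwE (bigD1 (lst hm)) // [in RHS](bigD1 (lst hm)) //=.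
under eq_bigr => i ilst do rewrite (negbTE ilst).
rewrite eqxx dotDr dot_trmx_mulmx -scalemxAl !(dotDl, dotZl, dotZr) (dotC v.2).
lra.
Qed.

Lemma Hop_Mop v : rho != 0 -> gamma != 0 ->
  Hop hm A P rho gamma (Mop hm A rho gamma v) = Qop hm A P rho gamma v.
Proof.
move=> rho0 gamma0; apply: wspP => [i|] /=; last first.
  move: (A (lst hm) *m v.1 (lst hm)) v.2 => p q.
  by apply/matrixP => i j; rewrite !mxE; field; rewrite gamma0 rho0.
case: eqP => [->|//] /=.
rewrite !mulmxDl !mulmxDr -!scalemxAl -!scalemxAr -!mulmxA.
move: (P (lst hm) *m v.1 (lst hm)) ((A (lst hm))^T *m (A (lst hm) *m v.1 (lst hm)))
  ((A (lst hm))^T *m v.2) => p q r.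
by apply/matrixP => i0 j0; rewrite !mxE; field.
Qed.

Lemma normH_sub_Mop e d : (forall i, (P i)^T = P i) -> rho != 0 -> gamma != 0 ->
  normH hm A P rho gamma (wsub e (Mop hm A rho gamma d))
  = normH hm A P rho gamma e - normN hm A P rho gamma d
    - 2 * ipw (wsub e d) (Qop hm A P rho gamma d).
Proof.
move=> P_sym rho0 gamma0; rewrite /normH /normN /Nop.
rewrite Hop_sub Hop_Mop // !ipw_subl !ipw_subr ipw_addr ipw_QTop ipw_MTop.
rewrite (Hop_sym (Mop hm A rho gamma d) e) // Hop_Mop //.
lra.
Qed.

End BlockOperators.

Section PredictionStep.
Context {R : realType} {m : nat} {hm : (2 <= m)%N} {l : nat} {n : 'I_m -> nat}.
Context {theta : forall i, 'cV[R]_(n i) -> R} {X : forall i, set 'cV[R]_(n i)}.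
Context {A : forall i, 'M[R]_(l, n i)} {b : 'cV[R]_l} {P : forall i, 'M[R]_(n i)}.
Context {rho gamma : R} {xs : nat -> fam R n} {ys : nat -> 'cV[R]_l}.
Hypotheses (theta_cvx : forall i, cvx_fun (theta i)) (X_cvx : forall i, cvx_set (X i)).
Hypotheses (P_sym : forall i, (P i)^T = P i) (rho0 : rho != 0).
Hypothesis iter : is_LGADMM hm A b P rho gamma theta X xs ys.
Variable k : nat.

Local Notation lst := (lst hm).
Local Notation wb := (wbar hm A b rho xs ys k).
Local Notation d := (wsub (xs k, ys k) wb).
Local Notation Qd := (Qop hm A P rho gamma d).
Local Notation S1 := (\sum_(j < m | j != lst) A j *m xs k.+1 j).

Lemma LGADMM_correction : (xs k.+1, ys k.+1) = wsub (xs k, ys k) (Mop hm A rho gamma d).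
Proof.
have [_ [_ ->]] := iter.2 k.
apply: wspP => [i|] /=; first by rewrite opprB addrC subrK.
rewrite mulmxBr.
move: S1 (A lst *m xs k lst) (A lst *m xs k.+1 lst) (ys k) b => s a0 a1 y c.
by apply/matrixP => i j; rewrite !mxE; ring.
Qed.

Lemma wbar_inW : inW X wb.
Proof.
move=> i; have [notlst [lst_min _]] := iter.2 k.
by case: (eqVneq i lst) => [->|ilst]; [case: lst_min | case: (notlst i ilst)].
Qed.

Lemma wbar_vi_notlst i z : i != lst -> X i z ->
  0 <= theta i z - theta i (wb.1 i) + dot (z - wb.1 i) ((Fop A b wb).1 i - Qd.1 i).
Proof.
move=> ilst Xz; have x_min := (iter.2 k).1 i ilst.
set c := \sum_(j < m | j != i) A j *m xs k j - b - rho^-1 *: ys k.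
set T := \sum_(j < m | (j != lst) && (j != i)) A j *m (xs k j - xs k.+1 j).
have split_T : T = \sum_(j < m | (j != lst) && (j != i)) A j *m xs k j
                 - \sum_(j < m | (j != lst) && (j != i)) A j *m xs k.+1 j.
  by rewrite -sumrB; apply: eq_bigr => j _; rewrite mulmxBr.
have sum_k : \sum_(j < m | j != i) A j *m xs k j
    = A lst *m xs k lst + \sum_(j < m | (j != lst) && (j != i)) A j *m xs k j.
  rewrite (bigD1 lst) 1?eq_sym //=.
  by congr (_ + _); apply: eq_bigl => j; rewrite andbC.
have sum_k1 : S1 = A i *m xs k.+1 i
    + \sum_(j < m | (j != lst) && (j != i)) A j *m xs k.+1 j by rewrite (bigD1 i).
have resid : rho *: (A i *m xs k.+1 i + c) = - wb.2 + rho *: T.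
  rewrite /= /c sum_k sum_k1 split_T.
  move: (A i *m xs k.+1 i) (A lst *m xs k lst) (ys k)
    (\sum_(j < m | (j != lst) && (j != i)) A j *m xs k j)
    (\sum_(j < m | (j != lst) && (j != i)) A j *m xs k.+1 j) => a y0 y s s1.
  by apply/matrixP => p q; rewrite !mxE; field.
have grad : rho *: ((A i)^T *m (A i *m xs k.+1 i + c)) + P i *m (xs k.+1 i - xs k i)
    = (Fop A b wb).1 i - Qd.1 i.
  rewrite scalemxAr resid /Fop /Qop /G1op /= (negbTE ilst).
  have -> : \sum_(j < m | (j != lst) && (j != i)) (A i)^T *m A j *m (xs k j - xs k.+1 j)
      = (A i)^T *m T by rewrite mulmx_sumr; apply: eq_bigr => j _; rewrite mulmxA.
  rewrite mulmxDr mulmxN -scalemxAr !mulmxBr.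
  move: ((A i)^T *m wb.2) ((A i)^T *m T) (P i *m xs k i) (P i *m xs k.+1 i) => p q r s.
  by apply/matrixP => p0 q0; rewrite !mxE; ring.
rewrite -grad; apply: prox_argmin_vi => //.
by move: x_min; rewrite /subobj /c; under [F in _ -> is_argmin _ F _]eq_fun do rewrite !addrA.
Qed.

Lemma wbar_vi_lst z : X lst z ->
  0 <= theta lst z - theta lst (wb.1 lst) + dot (z - wb.1 lst) ((Fop A b wb).1 lst - Qd.1 lst).
Proof.
move=> Xz; have x_min := (iter.2 k).2.1.
set c := gamma *: S1 + (1 - gamma) *: (b - A lst *m xs k lst) - b - rho^-1 *: ys k.
have reorder z' : gamma *: S1 + (1 - gamma) *: (b - A lst *m xs k lst) + A lst *m z'
    - b - rho^-1 *: ys k = A lst *m z' + c.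
  by rewrite /c; apply/matrixP => p q; rewrite !mxE; ring.
have resid : rho *: (A lst *m xs k.+1 lst + c)
    = rho *: (A lst *m (xs k.+1 lst - xs k lst)) - wb.2 - (1 - gamma) *: (ys k - wb.2).
  rewrite /= /c mulmxBr.
  move: S1 (A lst *m xs k lst) (A lst *m xs k.+1 lst) (ys k) => s a0 a1 y.
  by apply/matrixP => p q; rewrite !mxE; field.
have grad : rho *: ((A lst)^T *m (A lst *m xs k.+1 lst + c)) + P lst *m (xs k.+1 lst - xs k lst)
    = (Fop A b wb).1 lst - Qd.1 lst.
  rewrite scalemxAr resid /Fop /Qop /= eqxx mulmxDl -scalemxAl -mulmxA.
  do 3 rewrite ?(mulmxDr, mulmxBr, mulmxN) -?scalemxAr.
  move: ((A lst)^T *m (A lst *m xs k.+1 lst)) ((A lst)^T *m (A lst *m xs k lst))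
    ((A lst)^T *m ys k) ((A lst)^T *m S1) ((A lst)^T *m b)
    (P lst *m xs k.+1 lst) (P lst *m xs k lst) => p1 p2 p3 p4 p5 p6 p7.
  by apply/matrixP => p q; rewrite !mxE; ring.
rewrite -grad; apply: prox_argmin_vi => //.
by move: x_min; rewrite /subobj_m; under [F in is_argmin _ F _ -> _]eq_fun do rewrite reorder.
Qed.

Lemma Qop_wbar_y : Qd.2 = (Fop A b wb).2.
Proof.
rewrite /Qop /Fop /= [in RHS](bigD1 lst) //= mulmxBr.
move: S1 (A lst *m xs k lst) (A lst *m xs k.+1 lst) (ys k) b => s a0 a1 y c.
by apply/matrixP => p q; rewrite !mxE; field.
Qed.

Lemma wbar_vi w : inW X w ->
  ipw (wsub w wb) Qd <= thetaU theta w.1 - thetaU theta wb.1 + ipw (wsub w wb) (Fop A b wb).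
Proof.
move=> Xw.
have block i : dot (w.1 i - wb.1 i) (Qd.1 i)
    <= theta i (w.1 i) - theta i (wb.1 i) + dot (w.1 i - wb.1 i) ((Fop A b wb).1 i).
  have [->|ilst] := eqVneq i lst.
    by have := wbar_vi_lst _ (Xw lst); rewrite dotBr; lra.
  by have := wbar_vi_notlst _ _ ilst (Xw i); rewrite dotBr; lra.
rewrite !ipwE Qop_wbar_y /thetaU.
have : \sum_(i < m) dot (w.1 i - wb.1 i) (Qd.1 i)
    <= \sum_(i < m) (theta i (w.1 i) - theta i (wb.1 i) + dot (w.1 i - wb.1 i) ((Fop A b wb).1 i)).
  by apply: ler_sum => i _; apply: block.
rewrite big_split sumrB /=.
lra.
Qed.

Lemma wbar_Qop_le0 ws : Wstar A b theta X ws -> ipw (wsub ws wb) Qd <= 0.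
Proof.
move=> [Xws ws_vi].
have := wbar_vi _ Xws; have := ws_vi _ wbar_inW; have := Fop_skew A b ws wb.
lra.
Qed.

End PredictionStep.

Theorem lemma3p3 (R : realType) (m : nat) (hm : (2 <= m)%N) (l : nat)
  (n : 'I_m -> nat)
  (theta : forall i : 'I_m, 'cV[R]_(n i) -> R)
  (X : forall i : 'I_m, set 'cV[R]_(n i))
  (A : forall i : 'I_m, 'M[R]_(l, n i)) (b : 'cV[R]_l)
  (htheta : forall i, cvx_fun (theta i))
  (hXne : forall i, X i !=set0)
  (hXcl : forall i, closed (X i))
  (hXcv : forall i, cvx_set (X i))
  (hA : forall i, \rank (A i) = n i)
  (hsol : exists u, is_solP A b theta X u)
  (hWne : exists ws, Wstar A b theta X ws)
  (rho gamma : R) (hrho : 0 < rho) (hgamma : 0 < gamma < 2)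
  (P : forall i : 'I_m, 'M[R]_(n i))
  (hP : forall i, spd (P i))
  (hG1 : forall x : fam R n, (exists i, i != lst hm /\ x i != 0) -> 0 < qG1 hm A P rho x)
  (xs : nat -> fam R n) (ys : nat -> 'cV[R]_l)
  (hiter : is_LGADMM hm A b P rho gamma theta X xs ys) :
  forall (k : nat) (ws : Wsp R l n), Wstar A b theta X ws ->
    normH hm A P rho gamma (wsub (xs k.+1, ys k.+1) ws)
    <= normH hm A P rho gamma (wsub (xs k, ys k) ws)
       - normN hm A P rho gamma (wsub (xs k, ys k) (wbar hm A b rho xs ys k)).
Proof.
move=> k ws ws_sol.
have P_sym i : (P i)^T = P i by case: (hP i).
have rho0 : rho != 0 by rewrite gt_eqF.
have gamma0 : gamma != 0 by case/andP: hgamma => gamma_gt0 _; rewrite gt_eqF.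
rewrite (LGADMM_correction hiter) wsubAC normH_sub_Mop // wsub_subKl.
have := wbar_Qop_le0 htheta hXcv P_sym rho0 hiter k _ ws_sol.
rewrite !ipw_subl; lra.
Qed.
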